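(* Let $S$ be a semigroup and let $M = S\cup\{1_M\}$ be the monoid obtained from $S$ by adjoining an identity element $1_M\notin S$ (so $1_M s = s1_M = s$ for all $s\in M$ and $S$ is a subsemigroup of $M$). Then $M$ is sofic.
   Context: A semigroup is a set with an associative binary operation. For a non-empty finite set $X$, $\mathrm{Map}(X)$ is the monoid of all maps $X\to X$ under composition (identity $\mathrm{Id}_X$) with the Hamming metric $d_X(f,g)=|\{x\in X : f(x)\ne g(x)\}|/|X|$. For a monoid $M$, finite $K\subset M$ and $\varepsilon,\alpha>0$, a map $\varphi\colon M\to\mathrm{Map}(X)$ is a $(K,\varepsilon)$-morphism if $d_X(\varphi(k_1k_2),\varphi(k_1)\varphi(k_2))\le\varepsilon$ for all $k_1,k_2\in K$ and $d_X(\varphi(1_M),\mathrm{Id}_X)\le\varepsilon$; it is $(K,\alpha)$-injective if $d_X(\varphi(k_1),\varphi(k_2))\ge\alpha$ for all distinct $k_1,k_2\in K$. $M$ is sofic if for every finite $K\subset M$ and every $\varepsilon>0$ there exist a non-empty finite set $X$ and a $(K,1-\varepsilon)$-injective $(K,\varepsilon)$-morphism $\varphi\colon M\to\mathrm{Map}(X)$. *)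

From mathcomp Require Import all_boot.
From Stdlib Require Import Reals List.
Set Implicit Arguments. Unset Strict Implicit. Unset Printing Implicit Defensive.

Local Open Scope R_scope.

Definition hamming (X : finType) (f g : X -> X) : R :=
  INR #|[pred x | f x != g x]| / INR #|X|.

Definition is_Keps_morphism (M : Type) (mul : M -> M -> M) (one : M)
  (X : finType) (K : list M) (eps : R) (phi : M -> X -> X) : Prop :=
  (forall k1 k2, In k1 K -> In k2 K ->
     hamming (phi (mul k1 k2)) (fun x => phi k1 (phi k2 x)) <= eps)
  /\ hamming (phi one) (fun x => x) <= eps.

Definition is_Kalpha_injective (M : Type) (X : finType) (K : list M)
  (alpha : R) (phi : M -> X -> X) : Prop :=
  forall k1 k2, In k1 K -> In k2 K -> k1 <> k2 -> alpha <= hamming (phi k1) (phi k2).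

Definition sofic_monoid (M : Type) (mul : M -> M -> M) (one : M) : Prop :=
  forall (K : list M) (eps : R), 0 < eps ->
    exists (X : finType), is_true (0 < #|X|)%nat /\
      exists phi : M -> X -> X,
        @is_Kalpha_injective M X K (1 - eps) phi /\
        @is_Keps_morphism M mul one X K eps phi.

(* M = S ∪ {1_M}: the monoid obtained by adjoining an identity (None) to a semigroup S. *)
Definition adjoin_one_mul (S : Type) (op : S -> S -> S) (x y : option S) : option S :=
  match x, y with
  | None, _ => y
  | _, None => x
  | Some a, Some b => Some (op a b)
  end.

(* Take X = K ⊔ T, where T is a large set of extra points each standing for
   1_M, and let s ∈ S act by x ↦ s·x, with x read as an element of M and the
   result written back to its position in K (or to a point of T if it falls
   outside K).  The identity acts trivially, so phi(1_M) = Id_X exactly.  On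
   T, phi(k) is the constant map to the position of k (k ≠ 1_M), so phi(k1 k2)
   and phi(k1) ∘ phi(k2) agree on T, while distinct elements of K are
   separated at every point of T.  Hence all defects are bounded by |K|/|X|,
   which is as small as we like once T is large. *)

From mathcomp Require Import all_boot.
From Stdlib Require Import Reals List.
From Stdlib Require Import ClassicalEpsilon Lra.
From mathcomp Require Import zify.

Set Implicit Arguments.
Unset Strict Implicit.
Unset Printing Implicit Defensive.

Local Open Scope R_scope.

Lemma hamming_refl (X : finType) (f : X -> X) : hamming f f = 0.
Proof.
rewrite /hamming (@eq_card0 _ [pred x | f x != f x]) ?Rdiv_0_l // => x.
by rewrite inE eqxx.
Qed.

Lemma hamming_le_of_eq_off (X : finType) (A : {set X}) (f g : X -> X) :
  0 < INR #|X| -> {in [predC A], f =1 g} -> hamming f g <= INR #|A| / INR #|X|.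
Proof.
move=> X_gt0 eq_fg; apply: Rmult_le_compat_r.
  by apply/Rlt_le/Rinv_0_lt_compat.
apply/le_INR/leP/subset_leq_card/subsetP => x; rewrite !inE.
by apply: contraNT => Ax; rewrite eq_fg ?inE.
Qed.

Lemma hamming_ge_of_neq_on (X : finType) (A : {set X}) (f g : X -> X) :
  0 < INR #|X| -> {in A, forall x, f x <> g x} -> INR #|A| / INR #|X| <= hamming f g.
Proof.
move=> X_gt0 neq_fg; apply: Rmult_le_compat_r.
  by apply/Rlt_le/Rinv_0_lt_compat.
apply/le_INR/leP/subset_leq_card/subsetP => x Ax.
by rewrite inE; apply/eqP; exact: neq_fg.
Qed.

Section HeadTail.

Variables n m : nat.

Definition head_tail : finType := ('I_n + 'I_m.+1)%type.
Local Notation X := head_tail.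

Definition head_ratio : R := INR n / INR (n + m.+1)%nat.

Lemma card_head_tail : #|X| = (n + m.+1)%nat.
Proof. by rewrite card_sum !card_ord. Qed.

Lemma card_head_tail_gt0 : 0 < INR #|X|.
Proof. by rewrite card_head_tail; apply: lt_0_INR; lia. Qed.

Lemma hamming_le_head_ratio (f g : X -> X) :
  (forall j, f (inr j) = g (inr j)) -> hamming f g <= head_ratio.
Proof.
move=> eq_tail; rewrite /head_ratio -card_head_tail.
have -> : n = #|[set inl i | i : 'I_n] : {set X}|.
  by rewrite card_imset ?card_ord // => i i' [].
apply: hamming_le_of_eq_off card_head_tail_gt0 _ => -[i|j] //.
by rewrite !inE imset_f.
Qed.

Lemma hamming_ge_head_ratio (f g : X -> X) :
  (forall j, f (inr j) <> g (inr j)) -> 1 - head_ratio <= hamming f g.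
Proof.
move=> neq_tail.
have tail_ge := @hamming_ge_of_neq_on _ [set inr j | j : 'I_m.+1] f g
  card_head_tail_gt0.
apply: Rle_trans (tail_ge _); last first.
  by move=> _ /imsetP [j _ ->]; exact: neq_tail.
rewrite card_imset ?card_ord ?card_head_tail; last by move=> j j' [].
have N_gt0 : 0 < INR (n + m.+1)%nat by apply: lt_0_INR; lia.
rewrite /head_ratio plus_INR in N_gt0 *; right; field; lra.
Qed.

End HeadTail.

Lemma exists_head_ratio_le (n : nat) (eps : R) :
  0 < eps -> exists m, head_ratio n m <= eps.
Proof.
move=> eps_gt0; have [m le_n_eps_m] := INR_archimed eps (INR n) eps_gt0.
exists m; rewrite /head_ratio.
have le_m : INR m <= INR (n + m.+1)%nat by apply: le_INR; lia.
have N_gt0 : 0 < INR (n + m.+1)%nat by apply: lt_0_INR; lia.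
apply: (Rmult_le_reg_r _ _ _ N_gt0); rewrite /Rdiv Rmult_assoc Rinv_l; nra.
Qed.

Section LeftMultiplication.

Variables (S : Type) (op : S -> S -> S) (K : list (option S)) (m : nat).
Local Notation M := (option S).
Local Notation mul := (adjoin_one_mul op).

Definition point : finType := head_tail (length K) m.

Definition decode (x : point) : M :=
  if x is inl i then List.nth i K None else None.

(* Elements outside [K] are sent to a tail point, i.e. decoded as 1_M. *)
Definition encode (a : M) : point :=
  match excluded_middle_informative
          (exists i : 'I_(length K), List.nth i K None = a) with
  | left ex_i => inl (proj1_sig (constructive_indefinite_description _ ex_i))
  | right _ => inr ord0
  end.

Definition left_mul (a : M) (x : point) : point :=
  if a is None then x else encode (mul a (decode x)).

Lemma decode_encode a : In a K -> decode (encode a) = a.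
Proof.
move=> /(In_nth _ _ None) [i [lt_i_K nth_i]].
rewrite /encode; case: excluded_middle_informative => [ex_i|no_i].
  by case: constructive_indefinite_description.
by case: no_i; exists (Ordinal (introT ltP lt_i_K)).
Qed.

Lemma left_mul_mul_tail k1 k2 j : In k2 K ->
  left_mul (mul k1 k2) (inr j) = left_mul k1 (left_mul k2 (inr j)).
Proof.
by case: k1 => [s|]; case: k2 => [t|] //= K_t; rewrite decode_encode.
Qed.

Lemma left_mul_tail_inj k1 k2 j : In k1 K -> In k2 K -> k1 <> k2 ->
  left_mul k1 (inr j) <> left_mul k2 (inr j).
Proof.
move=> K_k1 K_k2 neq_k eq_k; apply: neq_k.
case: k1 K_k1 eq_k => [s|]; case: k2 K_k2 => [t|] //= K_k2 K_k1 eq_k.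
- by rewrite -(decode_encode K_k1) -(decode_encode K_k2) eq_k.
- by have := decode_encode K_k1; rewrite eq_k.
- by have := decode_encode K_k2; rewrite -eq_k.
Qed.

End LeftMultiplication.

(* [op_assoc] is deliberately unused: soficity only tests products of two
   elements of [K], and the construction handles them for any unital magma. *)
Theorem proposition4p8 (S : Type) (op : S -> S -> S)
  (op_assoc : forall a b c : S, op a (op b c) = op (op a b) c) :
  sofic_monoid (adjoin_one_mul op) None.
Proof.
move=> K eps eps_gt0.
have [m ratio_le_eps] := exists_head_ratio_le (length K) eps_gt0.
exists (point K m); split; first by rewrite card_head_tail addnS.
exists (left_mul op (m := m)); split; [|split].
- move=> k1 k2 K_k1 K_k2 neq_k.
  apply: Rle_trans (hamming_ge_head_ratio _) => [|j]; first lra.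
  exact: left_mul_tail_inj.
- move=> k1 k2 _ K_k2.
  apply: Rle_trans (hamming_le_head_ratio _) ratio_le_eps => j.
  exact: left_mul_mul_tail.
- by rewrite hamming_refl; lra.
Qed.
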